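(* Let $\Sigma$ be a finite alphabet, let $\mathcal D$ be a probability distribution over $\Sigma^\ast$, let $L_{\mathcal R}\subseteq\Sigma^\ast$ be the language of an RNN acceptor $\mathcal R$ (accessible only through membership queries $u\mapsto [u\in L_{\mathcal R}]$), let $\psi$ be an LTL formula (the query), and let $\varepsilon,\delta\in(0,1)$. Run the procedure LEXR described in the context on these inputs. Then the probability (over the random test words drawn by the verifier) that LEXR terminates and returns an LTL formula $\varphi$ which is not an $\varepsilon$-explanation for $\mathcal R$ and $\psi$ is at most $\delta$; i.e., whenever LEXR returns a formula $\varphi$, it is an $\varepsilon$-explanation, meaning $\mathbf P_{\mathcal D}\big(L(\varphi)\oplus(L_{\mathcal R}\cap L(\psi))\big)<\varepsilon$, with probability at least $1-\delta$.
   Context: Words are finite sequences over the finite alphabet $\Sigma$; $\Sigma^\ast$ is the set of all finite words, $\lambda$ the empty word. An RNN acceptor $\mathcal R$ is given abstractly by a state-update map $g:\mathbb R^{d_s}\times\Sigma\to\mathbb R^{d_s}$, an initial state $s_I$, and a classifier $f:\mathbb R^{d_s}\to\{0,1\}$; extending $g$ to words by $g^\ast(s,\lambda)=s$, $g^\ast(s,ua)=g(g^\ast(s,u),a)$, its language is $L(\mathcal R)=\{u\in\Sigma^\ast: f(g^\ast(s_I,u))=1\}$. LTL formulas are generated by $\varphi::= a\in\Sigma\mid\neg\varphi\mid\varphi\vee\varphi\mid \mathbf X\varphi\mid \varphi\,\mathbf U\,\varphi$ (with the usual abbreviations $\top,\bot,\wedge,\to,\mathbf F\varphi=\top\mathbf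 U\varphi,\mathbf G\varphi=\neg\mathbf F\neg\varphi$), interpreted over finite words $u=a_1\dots a_n$: $(u,i)\models a$ iff $a_i=a$; negation and disjunction as usual; $(u,i)\models\mathbf X\varphi$ iff $i<n$ and $(u,i+1)\models\varphi$; $(u,i)\models\varphi_1\mathbf U\varphi_2$ iff there is $j\in\{i,\dots,n\}$ with $(u,j)\models\varphi_2$ and $(u,k)\models\varphi_1$ for all $i\le k<j$. $u\models\varphi$ means $(u,1)\models\varphi$, and $L(\varphi)=\{u: u\models\varphi\}$. $\oplus$ denotes symmetric difference of languages. A formula $\varphi$ is an $\varepsilon$-explanation for $\mathcal R$ and $\psi$ if $\mathbf P_{\mathcal D}(\{u\in\Sigma^\ast: u\in L(\varphi)\oplus(L(\mathcal R)\cap L(\psi))\})<\varepsilon$. Procedure LEXR: maintain a finite sample $\mathcal S\subset\Sigma^\ast\times\{0,1\}$, initially empty. In iteration $i=1,2,\dots$: (1) the learner outputs an LTL formula $\varphi$ consistent with $\mathcal S$ (every $(u,1)\in\mathcal S$ satisfies $u\models\varphi$ and every $(u,0)\in\mathcal S$ satisfies $u\not\models\varphi$; the paper's learner picks one of minimal size via SAT solving); (2) the verifier draws a test suite $T_i$ of $r_i=\lceil\frac1\varepsilon(i\ln 2-\ln\delta)\rceil$ words independently according to $\mathcal D$ and checks whether some $u\in T_i$ lies in $L(\varphi)\oplus(L(\mathcal R)\cap L(\psi))$ (a counterexample); (3) if there is no counterexample, LEXR terminates and returns $\varphi$; otherwise the counterexample(s) $u$ are added to $\mathcal S$ with label $1$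 if $u\in L(\mathcal R)\cap L(\psi)$ and label $0$ otherwise, and the next iteration starts. LEXR need not terminate. *)

From HB Require Import structures.
From mathcomp Require Import all_boot all_order all_algebra.
From mathcomp Require Import boolp classical_sets reals ereal esum exp.
Set Implicit Arguments. Unset Strict Implicit. Unset Printing Implicit Defensive.
Import Order.TTheory GRing.Theory Num.Theory.

Record rnn (R : realType) (Sigma : finType) := RNN {
  rnn_ds : nat;
  rnn_g  : 'rV[R]_rnn_ds -> Sigma -> 'rV[R]_rnn_ds;
  rnn_sI : 'rV[R]_rnn_ds;
  rnn_f  : 'rV[R]_rnn_ds -> bool }.                     (* classifier f (1 = true) *)

Definition rnn_run (R : realType) (Sigma : finType) (N : rnn R Sigma)
  (s : 'rV[R]_(rnn_ds N)) (u : seq Sigma) : 'rV[R]_(rnn_ds N) :=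
  foldl (@rnn_g R Sigma N) s u.

Definition rnn_lang (R : realType) (Sigma : finType) (N : rnn R Sigma)
  (u : seq Sigma) : bool := rnn_f (rnn_run (rnn_sI N) u).

Inductive ltl (Sigma : Type) :=
| LAtom of Sigma
| LNot of ltl Sigma
| LOr of ltl Sigma & ltl Sigma
| LNext of ltl Sigma
| LUntil of ltl Sigma & ltl Sigma.

(* (u, i) |= phi, positions are 1-based: 1 <= i <= n = size u *)
Fixpoint ltl_sat (Sigma : eqType) (u : seq Sigma) (phi : ltl Sigma) (i : nat)
  : bool :=
  match phi with
  | LAtom a => (0 < i) && (i <= size u) && (onth u i.-1 == Some a)
  | LNot p => ~~ ltl_sat u p i
  | LOr p q => ltl_sat u p i || ltl_sat u q i
  | LNext p => (i < size u) && ltl_sat u p i.+1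
  | LUntil p q =>
      has (fun j => ltl_sat u q j && all (fun k => ltl_sat u p k) (iota i (j - i)))
          (iota i ((size u).+1 - i))
  end.

Definition ltl_models (Sigma : eqType) (u : seq Sigma) (phi : ltl Sigma) : bool :=
  ltl_sat u phi 1.

Local Open Scope ring_scope.
Local Open Scope classical_set_scope.

Definition is_distr (R : realType) (Sigma : finType) (D : seq Sigma -> R) : Prop :=
  (forall u, 0 <= D u) /\ (\esum_(u in [set: seq Sigma]) (D u)%:E = 1%E).

Definition probD (R : realType) (Sigma : finType) (D : seq Sigma -> R)
  (A : set (seq Sigma)) : \bar R := \esum_(u in A) (D u)%:E.

Definition target (R : realType) (Sigma : finType) (N : rnn R Sigma)
  (psi : ltl Sigma) (u : seq Sigma) : bool :=
  rnn_lang N u && ltl_models u psi.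

Definition mismatch (R : realType) (Sigma : finType) (N : rnn R Sigma)
  (psi : ltl Sigma) (phi : ltl Sigma) (u : seq Sigma) : bool :=
  ltl_models u phi != target N psi u.

Definition eps_explanation (R : realType) (Sigma : finType) (D : seq Sigma -> R)
  (N : rnn R Sigma) (psi : ltl Sigma) (eps : R) (phi : ltl Sigma) : Prop :=
  (probD D [set u | mismatch N psi phi u] < eps%:E)%E.

Definition sample (Sigma : Type) := seq (seq Sigma * bool).

Definition consistent (Sigma : eqType) (phi : ltl Sigma) (S : sample Sigma) : Prop :=
  forall u b, (u, b) \in S -> ltl_models u phi = b.

Definition valid_learner (Sigma : eqType) (learner : sample Sigma -> ltl Sigma)
  : Prop :=
  forall S, (exists phi, consistent phi S) -> consistent (learner S) S.

Definition suite_size (R : realType) (eps delta : R) (i : nat) : nat :=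
  `|Num.ceil (eps^-1 * (i%:R * ln 2 - ln delta))|%N.

(* Run LEXR from sample S on the list of test suites ts (T_i, T_{i+1}, ...).
   Returns Some phi iff LEXR terminates exactly when checking the LAST suite
   of ts (all earlier suites contained counterexamples), outputting phi. *)
Fixpoint lexr_run (R : realType) (Sigma : finType) (N : rnn R Sigma)
  (psi : ltl Sigma) (learner : sample Sigma -> ltl Sigma)
  (S : sample Sigma) (ts : seq (seq (seq Sigma))) : option (ltl Sigma) :=
  match ts with
  | [::] => None
  | T :: ts' =>
      let phi := learner S in
      let cex := [seq u <- T | mismatch N psi phi u] in
      match ts' with
      | [::] => if cex == [::] then Some phi else None
      | _ :: _ =>
          if cex == [::] then None
          else lexr_run N psi learner (S ++ [seq (u, target N psi u) | u <- cex]) ts'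
      end
  end.

(* probability weight of a finite sequence of i.i.d. D-distributed test words *)
Definition suites_weight (R : realType) (Sigma : finType) (D : seq Sigma -> R)
  (ts : seq (seq (seq Sigma))) : R :=
  \prod_(T <- ts) \prod_(u <- T) D u.

(* The event "LEXR terminates (at some iteration n) and returns a formula that
   is not an eps-explanation": the draws T_1..T_n of the first n iterations
   have sizes r_1..r_n and lead to termination at iteration n with bad output.
   Events for distinct n are disjoint (different lengths), so its probability
   is the sum over n of the finite-dimensional product probabilities. *)
Definition lexr_bad_event (R : realType) (Sigma : finType) (D : seq Sigma -> R)
  (N : rnn R Sigma) (psi : ltl Sigma) (learner : sample Sigma -> ltl Sigma)
  (eps delta : R) : set (seq (seq (seq Sigma))) :=
  [set ts | (exists n, map size ts = [seq suite_size eps delta i | i <- iota 1 n]) /\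
            exists phi, lexr_run N psi learner [::] ts = Some phi /\
                        ~ eps_explanation D N psi eps phi].

Definition lexr_bad_prob (R : realType) (Sigma : finType) (D : seq Sigma -> R)
  (N : rnn R Sigma) (psi : ltl Sigma) (learner : sample Sigma -> ltl Sigma)
  (eps delta : R) : \bar R :=
  \esum_(ts in lexr_bad_event D N psi learner eps delta) (suites_weight D ts)%:E.

From HB Require Import structures.
From mathcomp Require Import all_boot all_order all_algebra.
From mathcomp Require Import boolp classical_sets reals ereal esum exp.
From mathcomp Require Import fsbigop cardinality sequences lra.
From mathcomp Require finmap.
Set Implicit Arguments. Unset Strict Implicit. Unset Printing Implicit Defensive.
Import Order.TTheory GRing.Theory Num.Theory.
Local Open Scope ring_scope.
Local Open Scope classical_set_scope.

(* If LEXR stops at iteration n with a formula phi that is not an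
   eps-explanation, its last test suite consists of r_n words avoiding the
   mismatch set of phi, a set of D-mass at least eps.  Peeling the suites off
   one at a time, the earlier ones contribute a factor at most 1 and the last
   one a factor at most (1 - eps)^(r_n) <= delta / 2^n by the choice of r_n;
   summing over n gives at most delta.  All masses are bounded through their
   finite subfamilies, which is all an esum sees. *)

Lemma big_fiber_seq (R : nmodType) (X K : eqType) (key : X -> K) (ks : seq K)
    (s : seq X) (F : X -> R) :
  uniq ks -> (forall x, x \in s -> key x \in ks) ->
  \sum_(x <- s) F x = \sum_(k <- ks) \sum_(x <- s | key x == k) F x.
Proof.
move=> uks s_ks; under [RHS]eq_bigr do rewrite big_mkcond.
rewrite exchange_big /= big_seq [RHS]big_seq; apply: eq_bigr => x xs.
rewrite (bigD1_seq (key x)) ?s_ks //= eqxx big1 ?addr0 // => k.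
by rewrite eq_sym => /negbTE ->.
Qed.

Section Mass.
Variable R : realType.

Definition mass_le (X : eqType) (w : X -> R) (A : set X) (c : R) : Prop :=
  forall s : seq X, uniq s -> (forall x, x \in s -> A x) -> \sum_(x <- s) w x <= c.

Section MassTheory.
Variables (X : eqType) (w : X -> R).

Lemma mass_le_ge0 A c : mass_le w A c -> 0 <= c.
Proof. by move=> /(_ [::] isT) /=; rewrite big_nil; apply. Qed.

Lemma mass_le_sub A B c : mass_le w B c -> A `<=` B -> mass_le w A c.
Proof. by move=> Bc AB s us sA; apply: Bc => // x /sA /AB. Qed.

Lemma mass_le_trans A c c' : mass_le w A c -> c <= c' -> mass_le w A c'.
Proof. by move=> Ac cc' s us sA; apply: le_trans cc'; apply: Ac. Qed.

Lemma mass_le0 c : 0 <= c -> mass_le w set0 c.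
Proof. by move=> c0 [|x s] _; rewrite ?big_nil // => /(_ x (mem_head _ _)). Qed.

Lemma mass_le_set1 x : 0 <= w x -> mass_le w [set x] (w x).
Proof.
move=> wx0 s us sx; have /(uniq_leq_size us) : {subset s <= [:: x]}.
  by move=> y /sx ->; rewrite inE.
case: s us sx => [|y [|? ?]] //= _ sy _; first by rewrite big_nil.
by rewrite big_seq1 (sy y) // inE.
Qed.

End MassTheory.

Lemma mass_le_cons (X : eqType) (f : X -> R) (g w : seq X -> R) (P : set X)
    (Q : X -> set (seq X)) c b :
  (forall h t, w (h :: t) = f h * g t) -> (forall h, 0 <= f h) -> 0 <= b ->
  mass_le f P c -> (forall h, mass_le g (Q h) b) ->
  mass_le w [set x | if x is h :: t then P h /\ Q h t else False] (c * b).
Proof.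
move=> w_cons f0 b0 Pc Qb s us s_in.
have c0 := mass_le_ge0 Pc.
(* a default head [x0] for grouping by [head x0] is read off a nonempty [s] *)
case: s us s_in => [|[|x0 t0] s'] us s_in; first by rewrite big_nil mulr_ge0.
  by case: (s_in _ (mem_head _ _)).
set s := _ :: s' in us s_in *; clearbody s.
have s_cons x : x \in s -> exists h t, [/\ x = h :: t, P h & Q h t].
  by case: x => [|h t] /s_in // [Ph Qt]; exists h, t.
rewrite (big_fiber_seq (key := head x0) w (undup_uniq (map (head x0) s))); last first.
  by move=> x xs; rewrite mem_undup map_f.
set tails := fun h => [seq behead x | x <- s & head x0 x == h].
have fiberE h : \sum_(x <- s | head x0 x == h) w x = f h * \sum_(t <- tails h) g t.
  rewrite big_map big_filter big_distrr /= big_seq_cond [RHS]big_seq_cond.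
  by apply: eq_bigr => x /andP[/s_cons[h' [t [-> _ _]]] /eqP /= ->]; rewrite w_cons.
have tails_le h : \sum_(t <- tails h) g t <= b.
  apply: (Qb h) => [|t /mapP[x]]; last first.
    rewrite mem_filter => /andP[/eqP hx /s_cons[h' [t' [ex _ Qt]]]] ->.
    by move: hx; rewrite ex /= => <-.
  rewrite map_inj_in_uniq ?filter_uniq // => x y; rewrite !mem_filter.
  move=> /andP[/eqP hx /s_cons[hx' [tx [ex _ _]]]].
  move=> /andP[/eqP hy /s_cons[hy' [ty [ey _ _]]]].
  by move: hx hy; rewrite ex ey /= => -> -> ->.
under eq_bigr do rewrite fiberE.
apply: (le_trans (ler_sum _ (fun h _ => ler_wpM2l (f0 h) (tails_le h)))).
rewrite -big_distrl ler_wpM2r // Pc ?undup_uniq // => h.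
by rewrite mem_undup => /mapP[x /s_cons[h' [t [-> Ph _]]] ->].
Qed.

Lemma mass_le_tuples (X : eqType) (D : X -> R) (P : set X) c r :
  (forall u, 0 <= D u) -> mass_le D P c ->
  mass_le (fun T => \prod_(u <- T) D u)
    [set T | size T = r /\ forall u, u \in T -> P u] (c ^+ r).
Proof.
move=> D0 Pc; elim: r => [|r IH].
  apply: (mass_le_sub (B := [set [::]])) => [|T [/size0nil ->] //].
  have := mass_le_set1 (w := fun T => \prod_(u <- T) D u) (x := [::]).
  by rewrite big_nil expr0; apply.
have prod_cons h t : \prod_(u <- h :: t) D u = D h * \prod_(u <- t) D u.
  exact: big_cons.
rewrite exprS.
apply: (mass_le_sub (mass_le_cons prod_cons D0 (mass_le_ge0 IH) Pc (fun=> IH))).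
move=> [|h t] [] //= [st] Tin; split; first by apply: Tin; rewrite inE eqxx.
by split=> // u ut; apply: Tin; rewrite inE ut orbT.
Qed.

Lemma mass_le_fibers (X : eqType) (w : X -> R) (key : X -> nat)
    (A : nat -> set X) (B : set X) (c : nat -> R) b :
  (forall n, mass_le w (A n) (c n)) -> (forall x, B x -> A (key x) x) ->
  (forall m, \sum_(n < m) c n <= b) -> mass_le w B b.
Proof.
move=> Ac BA cb s us sB; set m := (\max_(x <- s) key x).+1.
rewrite (big_fiber_seq (key := key) w (iota_uniq 0 (m - 0))); last first.
  by move=> x xs; rewrite mem_iota add0n subn0 ltnS leq_bigmax_seq.
apply: le_trans (cb m); rewrite -(big_mkord xpredT); apply: ler_sum => n _.
rewrite -big_filter; apply: Ac; first exact: filter_uniq.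
by move=> x; rewrite mem_filter => /andP[/eqP <-] /sB /BA.
Qed.

Lemma esum_le_mass (T : choiceType) (w : T -> R) (A : set T) c :
  mass_le w A c -> (\esum_(x in A) (w x)%:E <= c%:E)%E.
Proof.
move=> Ac; apply: ge_ereal_sup => _ [F [finF FA] <-].
rewrite fsbig_finite //= sumEFin lee_fin Ac ?finmap.fset_uniq // => x.
by rewrite in_fset_set // => /set_mem /FA.
Qed.

Lemma mass_le_setC (T : choiceType) (w : T -> R) (A : set T) eps :
  mass_le w setT 1 -> (eps%:E <= \esum_(x in A) (w x)%:E)%E ->
  mass_le w (~` A) (1 - eps).
Proof.
move=> w1 epsA W uW WA.
suff : (\esum_(x in A) (w x)%:E <= (1 - \sum_(x <- W) w x)%:E)%E.
  by move/(le_trans epsA); rewrite lee_fin => ?; lra.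
apply: esum_le_mass => V uV VA; rewrite lerBrDr -big_cat /=.
apply: w1 => //; rewrite cat_uniq uV uW andbT /=; apply/hasPn => x /WA Ax.
by apply/negP => /VA.
Qed.

Lemma is_distr_mass_le1 (Sigma : finType) (D : seq Sigma -> R) :
  is_distr D -> mass_le D setT 1.
Proof.
move=> [_ D1] W uW _; rewrite -lee_fin -sumEFin (fsbig_seq _ _ uW) -D1.
by apply: esum_ge; exists [set` W] => //; split; [exact: finite_seq|].
Qed.

End Mass.

Section LexrBadRuns.
Variables (R : realType) (Sigma : finType) (D : seq Sigma -> R) (N : rnn R Sigma).
Variables (psi : ltl Sigma) (learner : sample Sigma -> ltl Sigma) (eps : R).
Variable r : nat -> nat.
Hypotheses (D_distr : is_distr D) (eps_le1 : eps <= 1).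

Definition lexr_update (S : sample Sigma) (T : seq (seq Sigma)) : sample Sigma :=
  S ++ [seq (u, target N psi u) | u <- T & mismatch N psi (learner S) u].

Lemma lexr_run1 S T phi : lexr_run N psi learner S [:: T] = Some phi ->
  phi = learner S /\ forall u, u \in T -> ~~ mismatch N psi (learner S) u.
Proof.
rewrite /= -[_ == [::]]negbK -has_filter.
by case: hasPn => // noncex [<-]; split.
Qed.

Lemma lexr_run_cons S T ts phi : ts != [::] ->
  lexr_run N psi learner S (T :: ts) = Some phi ->
  lexr_run N psi learner (lexr_update S T) ts = Some phi.
Proof. by case: ts => // t ts _ /=; case: ifP. Qed.

Definition lexr_bad_runs (S : sample Sigma) (k n : nat) : set (seq (seq (seq Sigma))) :=
  [set ts | map size ts = map r (iota k n.+1) /\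
            exists2 phi, lexr_run N psi learner S ts = Some phi &
                         ~ eps_explanation D N psi eps phi].

Lemma lexr_bad_runs_size S k n ts : lexr_bad_runs S k n ts -> size ts = n.+1.
Proof. by move=> [/(congr1 size)]; rewrite size_map size_map size_iota. Qed.

Lemma mass_le_lexr_bad_runs n S k :
  mass_le (suites_weight D) (lexr_bad_runs S k n) ((1 - eps) ^+ r (k + n)).
Proof.
have D0 : forall u, 0 <= D u := D_distr.1.
have weight_cons T ts :
    suites_weight D (T :: ts) = \prod_(u <- T) D u * suites_weight D ts.
  by rewrite /suites_weight big_cons.
have weight_ge0 T : 0 <= \prod_(u <- T) D u by apply: prodr_ge0.
have nil_ge0 : 0 <= suites_weight D [::] by rewrite /suites_weight big_nil.
elim: n S k => [|n IH] S k.
  have [good|bad] := pselect (eps_explanation D N psi eps (learner S)).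
    apply: mass_le_sub (mass_le0 _ _) _; first by rewrite exprn_ge0 // subr_ge0.
    move=> ts bad_ts; have := lexr_bad_runs_size bad_ts.
    by case: ts bad_ts => [|T [|]] // [_ [phi /lexr_run1[-> _]]].
  apply: mass_le_trans (_ : (1 - eps) ^+ r k * suites_weight D [::] <= _); last first.
    by rewrite /suites_weight big_nil mulr1 addn0.
  have noncex_mass : mass_le D (~` [set u | mismatch N psi (learner S) u]) (1 - eps).
    apply: mass_le_setC (is_distr_mass_le1 D_distr) _.
    by rewrite leNgt; apply/negP.
  apply: (mass_le_sub (mass_le_cons weight_cons weight_ge0 nil_ge0
    (mass_le_tuples (r := r k) D0 noncex_mass) (fun=> mass_le_set1 nil_ge0))).
  move=> ts bad_ts; have := lexr_bad_runs_size bad_ts.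
  case: ts bad_ts => [|T [|]] // [[sT] [phi /lexr_run1[-> noncex] _]] _.
  by split=> //; split=> // u /noncex /negP.
apply: mass_le_trans (_ : 1 ^+ r k * (1 - eps) ^+ r (k.+1 + n) <= _); last first.
  by rewrite expr1n mul1r addSnnS.
apply: (mass_le_sub (mass_le_cons weight_cons weight_ge0 (mass_le_ge0 (IH S k.+1))
  (mass_le_tuples (r := r k) D0 (is_distr_mass_le1 D_distr))
  (fun T => IH (lexr_update S T) k.+1))).
move=> ts bad_ts; have := lexr_bad_runs_size bad_ts.
case: ts bad_ts => [|T [|T' ts]] // [[sT sT' sts] [phi run bad]] _.
split=> //; split; first by rewrite /= sT' sts.
by exists phi => //; apply: lexr_run_cons run.
Qed.

End LexrBadRuns.

Lemma suite_size_pow_le (R : realType) (eps delta : R) n :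
  0 < eps < 1 -> 0 < delta < 1 ->
  (1 - eps) ^+ suite_size eps delta n <= delta * (2^-1) ^+ n.
Proof.
move=> /andP[eps0 eps1] /andP[delta0 delta1].
set x := eps^-1 * (n%:R * ln 2 - ln delta).
have ln2_gt0 : 0 < ln (2 : R) by apply: ln_gt0; lra.
have lndelta_lt0 : ln delta < 0 by apply: ln_lt0; rewrite delta0 delta1.
have x_ge0 : 0 <= x.
  rewrite mulr_ge0 ?invr_ge0 ?ltW //.
  suff : 0 <= n%:R * ln (2 : R) by lra.
  by rewrite mulr_ge0 ?ler0n ?ltW.
have x_le : x <= (suite_size eps delta n)%:R.
  rewrite /suite_size natr_absz ger0_norm ?ceil_ge //.
  by rewrite ceil_ge0 (lt_le_trans _ x_ge0) // ltrN10.
have xE : x * eps = n%:R * ln 2 - ln delta by rewrite mulrAC mulVf ?mul1r ?gt_eqF.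
apply: (le_trans (y := expR (- eps) ^+ suite_size eps delta n)).
  by rewrite lerXn2r ?nnegrE ?expR_ge0 ?expR_ge1Dx //; lra.
rewrite -expRM_natl; apply: (le_trans (y := expR (ln delta - n%:R * ln 2))).
  by rewrite ler_expR; nra.
by rewrite expRD lnK ?posrE // expRN expRM_natl lnK ?posrE // exprVn.
Qed.

Lemma sum_halves (R : realType) m : \sum_(n < m) (2^-1 : R) ^+ n.+1 = 1 - 2^-1 ^+ m.
Proof.
elim: m => [|m IH]; first by rewrite big_ord0 expr0 subrr.
rewrite big_ord_recr /= IH [in RHS]exprS.
have half2 : (2^-1 : R) * 2 = 1 by rewrite mulVf.
set y := (2^-1 : R) ^+ m; rewrite exprS -/y; lra.
Qed.

Theorem mainTheorem1 (R : realType) (Sigma : finType) (D : seq Sigma -> R)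
  (N : rnn R Sigma) (psi : ltl Sigma) (learner : sample Sigma -> ltl Sigma)
  (eps delta : R) :
  is_distr D -> valid_learner learner ->
  0 < eps < 1 -> 0 < delta < 1 ->
  (lexr_bad_prob D N psi learner eps delta <= delta%:E)%E.
Proof.
(* the bound holds whatever formulas the learner proposes *)
move=> D_distr _ eps01 delta01; have /andP[delta0 _] := delta01.
apply: esum_le_mass.
apply: (mass_le_fibers (key := fun ts => (size ts).-1)
  (A := lexr_bad_runs D N psi learner eps (suite_size eps delta) [::] 1)
  (c := fun n => delta * 2^-1 ^+ n.+1)).
- move=> n; apply: mass_le_trans (suite_size_pow_le n.+1 eps01 delta01).
  by apply: mass_le_lexr_bad_runs => //; case/andP: eps01 => _ /ltW.
- move=> ts [[n sizes] [phi [run bad]]]; split; last by exists phi.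
  have size_ts : size ts = n by rewrite -(size_map size) sizes size_map size_iota.
  have ts_nil : ts != [::] by case: (ts) run.
  by rewrite sizes -size_ts prednK // lt0n size_eq0.
- by move=> m; rewrite -big_distrr /= sum_halves ler_piMr ?ltW // gerBl.
Qed.
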